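(* Let $L_m$ be the quiver with one vertex and $m\ge0$ loops, and $d\geq0$. Then the set $\hat S(d)$ (for $Q=L_m$) is $$\hat S(d)=\begin{cases}\text{all subsets of }\{1,\ldots,d\},& m=0,\\ \{\emptyset,\{d\},\{d-1,d\},\ldots,\{2,\ldots,d\},\{1,\ldots,d\}\},& m=1,\\ \{\emptyset,\{1,\ldots,d\}\},& m\geq2.\end{cases}$$
   Context: For a quiver $Q$ with vertex set $Q_0$ and arrows $\alpha:i\to j$, and $\mathbf e\in\mathbb NQ_0$: for tuples $\mathbf K=(K_i)$ with $K_i\subset\{1,\dots,e_i\}$, $|\mathbf K|=(|K_i|)_i$; writing $K_i=\{k_{i,1}<\ldots<k_{i,|K_i|}\}$ and for $\mathbf L$ with $L_i\subset\{1,\dots,|K_i|\}$, $\mathrm{ht}(\mathbf K,\mathbf L)=\sum_i\sum_{j\in L_i}(k_{i,j}-j)$. The sets $\hat S(\mathbf e)$ are defined recursively: $\mathbf K$ (with $K_i\subset\{1,\dots,e_i\}$) belongs to $\hat S(\mathbf e)$ iff $\mathrm{ht}(\mathbf K,\mathbf L)\geq\sum_{\alpha:i\to j}|L_i|(e_j-|K_j|)$ for all $\mathbf L\in\hat S(|\mathbf K|)$. For $L_m$ (one vertex, $m$ loops) this reads: $K=\{k_1<\dots<k_{|K|}\}\subset\{1,\dots,d\}$ lies in $\hat S(d)$ iff $\sum_{j\in L}(k_j-j)\geq m|L|(d-|K|)$ for all $L\in\hat S(|K|)$. *)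

From mathcomp Require Import all_boot.
Unset Strict Implicit. Unset Printing Implicit Defensive.

(* Subsets K of {1,...,d} are encoded as K : {set 'I_d}, the element
   i : 'I_d standing for the integer i+1.  The increasing enumeration
   k_1 < ... < k_|K| of K is [seq i.+1 | i <- enum K] (enum 'I_d is increasing),
   so k_{j+1} = nth 0 (kseq d K) j. *)
Definition kseq (d : nat) (K : {set 'I_d}) : seq nat :=
  [seq (val i).+1 | i <- enum K].

(* ht(K,L) = sum_{j in L} (k_j - j), for L a subset of {1,...,|K|}
   (again j : 'I_#|K| stands for j+1).  Since k_j >= j the natural-number
   subtraction never truncates. *)
Definition ht (d : nat) (K : {set 'I_d}) (L : {set 'I_#|K|}) : nat :=
  \sum_(j in L) (nth 0 (kseq d K) j - (val j).+1).

Fixpoint Shat_fuel (n m d : nat) (K : {set 'I_d}) : bool :=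
  match n with
  | 0 => true
  | n'.+1 =>
      [forall L : {set 'I_#|K|},
         Shat_fuel n' m #|K| L ==> (m * #|L| * (d - #|K|) <= ht d K L)]
  end.

(* With fuel d.+1 this computes the genuine recursive definition: every recursive
   call either goes to a strictly smaller |K| < d, or has K = {1..d}, where the
   condition holds trivially (ht = 0 and d - |K| = 0). *)
Definition Shat (m d : nat) (K : {set 'I_d}) : bool := Shat_fuel d.+1 m d K.

From mathcomp Require Import all_boot zify.

(* Write k = |K|.  The j-th summand k_j - j of ht(K,L) lies between min K - 1
   and d - k, so ht(K,L) <= |L| (d - k), and for L = {1,...,k} equality forces
   every summand to be d - k, i.e. K = {d-k+1,...,d}.  As {1,...,k} always lies
   in \hat S(k), the defining condition with this L forces k (d - k) = 0 when
   m >= 2 and forces K to be such a suffix when m = 1; conversely every summand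
   of a suffix {t+1,...,d} is at least t = d - k. *)

Lemma sorted_ltn_nth_bounds (s : seq nat) (a b : nat) :
  sorted ltn s -> all (fun x => a <= x < b) s ->
  forall j, j < size s -> a + j <= nth 0 s j /\ nth 0 s j + (size s - j) <= b.
Proof.
elim: s a => [|x r IHr] a //= s_sorted /andP[/andP[le_ax lt_xb] r_bounds].
have r_gt_x : all (fun y => x.+1 <= y < b) r.
  apply/allP=> y yr; rewrite (allP (order_path_min ltn_trans s_sorted)) //=.
  by case/andP: (allP r_bounds y yr).
have IH := IHr x.+1 (path_sorted s_sorted) r_gt_x.
case=> [_ | j /IH] /=; last lia.
case: r {IHr s_sorted r_bounds} r_gt_x IH => [|y r] _ IH /=; first lia.
have [] := IH 0 isT; rewrite /=; lia.
Qed.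

Section IncreasingEnumeration.

Context {d : nat} {K : {set 'I_d}}.

Lemma sorted_val_enum : sorted ltn [seq val i | i <- enum K].
Proof.
apply: (subseq_sorted ltn_trans _ (iota_ltn_sorted 0 d)).
by rewrite -val_enum_ord map_subseq // enumT filter_subseq.
Qed.

Lemma nth_val_enum (j : 'I_#|K|) :
  nth 0 [seq val i | i <- enum K] j = enum_val j.
Proof. by rewrite (nth_map (enum_default j)) // -cardE. Qed.

Lemma enum_val_bounds (j : 'I_#|K|) {t : nat} : {in K, forall i : 'I_d, t <= i} ->
  t + j <= enum_val j /\ enum_val j + (#|K| - j) <= d.
Proof.
move=> K_ge_t.
have s_bounds : all (fun x => t <= x < d) [seq val i | i <- enum K].
  by apply/allP=> _ /mapP[i iK ->]; rewrite K_ge_t ?ltn_ord // -mem_enum.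
have := @sorted_ltn_nth_bounds _ _ _ sorted_val_enum s_bounds j.
by rewrite size_map -cardE nth_val_enum; apply.
Qed.

Lemma ht_termE (j : 'I_#|K|) : nth 0 (kseq d K) j - j.+1 = enum_val j - j.
Proof. by rewrite /kseq (nth_map (enum_default j)) -?cardE. Qed.

Lemma ht_term_bounds (j : 'I_#|K|) {t : nat} : {in K, forall i : 'I_d, t <= i} ->
  t <= nth 0 (kseq d K) j - j.+1 <= d - #|K|.
Proof.
move=> /(enum_val_bounds j) []; rewrite ht_termE; have := ltn_ord j; lia.
Qed.

Lemma ht_le (L : {set 'I_#|K|}) : ht d K L <= #|L| * (d - #|K|).
Proof.
rewrite /ht -sum_nat_const; apply: leq_sum => j _.
by case/andP: (ht_term_bounds j (fun _ _ => leq0n _)).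
Qed.

Lemma ht_ge (L : {set 'I_#|K|}) {t : nat} : {in K, forall i : 'I_d, t <= i} ->
  #|L| * t <= ht d K L.
Proof.
move=> K_ge_t; rewrite /ht -sum_nat_const; apply: leq_sum => j _.
by case/andP: (ht_term_bounds j K_ge_t).
Qed.

Lemma ht_setT_max_suffix : #|K| * (d - #|K|) <= ht d K setT ->
  {in K, forall i : 'I_d, d - #|K| <= i}.
Proof.
move=> ht_max i iK.
pose f (j : 'I_#|K|) := nth 0 (kseq d K) j - j.+1.
have f_le (j : 'I_#|K|) : j \in setT -> f j <= d - #|K| ?= iff (f j == d - #|K|).
  by move=> _; apply: leqif_eq; case/andP: (ht_term_bounds j (fun _ _ => leq0n _)).
have /forallP f_max : [forall j in setT, f j == d - #|K|].
  rewrite -(leqif_sum f_le).2 sum_nat_const cardsT card_ord eqn_leq ht_max andbT.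
  by have := ht_le setT; rewrite cardsT card_ord.
have /implyP /(_ (in_setT _)) /eqP := f_max (enum_rank_in iK i).
by rewrite /f ht_termE enum_rankK_in //; lia.
Qed.

Lemma card_suffix (t : nat) : #|[set i : 'I_d | t <= i]| = d - t.
Proof.
rewrite -sum1dep_card -(big_mkord (fun i => t <= i) (fun _ => 1)).
elim: d => [|n IHn]; first by rewrite big_geq.
rewrite big_mkcond big_nat_recr //= -big_mkcond IHn; case: leqP; lia.
Qed.

Lemma suffix_eq (t : nat) : {in K, forall i : 'I_d, t <= i} -> #|K| = d - t ->
  K = [set i : 'I_d | t <= i].
Proof.
move=> K_ge_t cardK; apply/eqP; rewrite eqEcard card_suffix cardK leqnn andbT.
by apply/subsetP=> i /K_ge_t; rewrite inE.
Qed.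

End IncreasingEnumeration.

Definition Shat_explicit (m d : nat) (K : {set 'I_d}) : bool :=
  match m with
  | 0 => true
  | 1 => [exists t : 'I_d.+1, K == [set i : 'I_d | t <= i]]
  | _ => (K == set0) || (K == setT)
  end.

Definition Shat_step (S : forall n, {set 'I_n} -> bool) (m d : nat)
    (K : {set 'I_d}) : bool :=
  [forall L : {set 'I_#|K|}, S #|K| L ==> (m * #|L| * (d - #|K|) <= ht d K L)].

Lemma Shat_fuelS n m d (K : {set 'I_d}) :
  Shat_fuel n.+1 m d K = Shat_step (Shat_fuel n m) m d K.
Proof. by []. Qed.

Lemma Shat_step_setT S m d : Shat_step S m d setT.
Proof.
rewrite /Shat_step; apply/forallP=> L; apply/implyP=> _.
have -> : d - #|[set: 'I_d]| = 0 by rewrite cardsT card_ord subnn.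
by rewrite muln0.
Qed.

Lemma Shat_explicit_setT m d : Shat_explicit m d setT.
Proof.
case: m => [|[|m]] //=; last by rewrite eqxx orbT.
by apply/existsP; exists ord0; apply/eqP/setP=> i; rewrite !inE.
Qed.

Lemma Shat_step_explicit1 d (K : {set 'I_d}) : #|K| < d ->
  Shat_step (Shat_explicit 1) 1 d K = Shat_explicit 1 d K.
Proof.
rewrite /Shat_step /= => ltKd; apply/idP/existsP => [KS | [t /eqP defK]].
  have := implyP (forallP KS setT) (Shat_explicit_setT 1 #|K|).
  rewrite cardsT card_ord mul1n => /ht_setT_max_suffix /suffix_eq defK.
  exists (inord (d - #|K|)); rewrite inordK; last lia.
  by apply/eqP/defK; rewrite subKn // ltnW.
have K_ge_t : {in K, forall i : 'I_d, t <= i} by move=> i; rewrite defK inE.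
have cardK : #|K| = d - t by rewrite defK card_suffix.
apply/forallP=> L; apply/implyP=> _; rewrite mul1n.
have -> : d - #|K| = t by rewrite cardK subKn // -ltnS.
exact: ht_ge.
Qed.

Lemma Shat_step_explicit_ge2 m d (K : {set 'I_d}) : #|K| < d ->
  Shat_step (Shat_explicit m.+2) m.+2 d K = Shat_explicit m.+2 d K.
Proof.
rewrite /Shat_step /= => ltKd; apply/idP/idP => [KS | /orP[] /eqP defK].
- have := implyP (forallP KS setT) (Shat_explicit_setT m.+2 #|K|).
  have := @ht_le d K setT; rewrite cardsT card_ord => ht_max ht_min.
  have : #|K| * (d - #|K|) == 0.
    rewrite -leqn0; move: ht_min ht_max; rewrite -mulnA.
    by move: (ht _ _ _) (#|K| * _) => h x; nia.
  by rewrite muln_eq0 subn_eq0 leqNgt ltKd orbF cards_eq0 => ->.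
- have cardL (L : {set 'I_#|K|}) : #|L| = 0.
    by apply/eqP; rewrite -leqn0 (leq_trans (max_card L)) // card_ord defK cards0.
  by apply/forallP=> L; rewrite cardL muln0 mul0n implybT.
- by rewrite defK cardsT card_ord ltnn in ltKd.
Qed.

Lemma Shat_step_explicit m d (K : {set 'I_d}) : #|K| < d ->
  Shat_step (Shat_explicit m) m d K = Shat_explicit m d K.
Proof.
case: m => [|[|m]]; [ | exact: Shat_step_explicit1 | exact: Shat_step_explicit_ge2].
by move=> _; apply/forallP=> L; rewrite implybT.
Qed.

Lemma Shat_fuelE n m d (K : {set 'I_d}) :
  d < n -> Shat_fuel n m d K = Shat_explicit m d K.
Proof.
elim: n d K => [|n IHn] d K // lt_d_n; rewrite Shat_fuelS.
have [ltKd | geKd] := ltnP #|K| d.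
  rewrite -Shat_step_explicit //; apply: eq_forallb => L.
  by rewrite IHn // (leq_trans ltKd).
have -> : K = setT by apply/eqP; rewrite eqEcard subsetT cardsT card_ord.
by rewrite Shat_step_setT Shat_explicit_setT.
Qed.

Theorem mainTheorem10 (m d : nat) (K : {set 'I_d}) :
  Shat m d K =
  match m with
  | 0 => true
  | 1 => [exists t : 'I_d.+1, K == [set i : 'I_d | t <= i]]
  | _ => (K == set0) || (K == setT)
  end.
Proof. exact: Shat_fuelE. Qed.
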